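(* Let $n\le m$ be natural numbers with $n$ coprime to $m$. Then $\frac{m!}{(n-1)!}\leq\dim(W_{n,m})$.
   Context: $\mathbb{F}$ is a field of characteristic zero; $\mathbb{F}\langle X\rangle$ the free non-unitary associative algebra on $X=\{x_1,x_2,\dots\}$; $(x^n)^T$ the smallest ideal containing $x^n$ invariant under all algebra endomorphisms; $V_m$ the space of multilinear polynomials of degree $m$ in $x_1,\dots,x_m$; $W_{n,m}:=V_m\cap(x^n)^T$ (defined for $n\le m$). *)

From HB Require Import structures.
From mathcomp Require Import all_boot all_algebra.
From mathcomp Require Import finmap monalg.
Set Implicit Arguments. Unset Strict Implicit. Unset Printing Implicit Defensive.
Import GRing.Theory.
Local Open Scope ring_scope.

(* The unital free associative algebra F<1,X> on variables indexed by nat: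
   linear combinations of words (free monoid {fmonom nat}).
   Convention: the variable x_(k+1) of the paper is the letter k. *)
Definition FA (F : fieldType) := {malg F[{fmonom nat}]}.

Definition xvar (F : fieldType) (i : nat) : FA F := << fmu i.-1 >>.

(* The free NON-unitary algebra F<X> is the subset of FA of elements with
   zero constant term (coefficient of the empty word). *)
Definition nonunital (F : fieldType) (p : FA F) : Prop :=
  p@_(FMonom [::]) = 0.

(* algebra endomorphisms of the non-unitary algebra F<X>
   (only the restriction of phi to F<X> matters) *)
Definition is_endo (F : fieldType) (phi : FA F -> FA F) : Prop :=
  [/\ forall p, nonunital p -> nonunital (phi p),
      forall (c : F) p q, nonunital p -> nonunital q ->
         phi (c *: p + q) = c *: phi p + phi q
    & forall p q, nonunital p -> nonunital q -> phi (p * q) = phi p * phi q].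

Definition is_ideal (F : fieldType) (I : FA F -> Prop) : Prop :=
  [/\ forall p, I p -> nonunital p,
      I 0,
      forall (c : F) p q, I p -> I q -> I (c *: p + q)
    & forall a p, nonunital a -> I p -> I (a * p) /\ I (p * a)].

Definition T_invariant (F : fieldType) (I : FA F -> Prop) : Prop :=
  forall phi, is_endo phi -> forall p, I p -> I (phi p).

Definition Tideal (F : fieldType) (f : FA F) (p : FA F) : Prop :=
  forall I, is_ideal I -> T_invariant I -> I f -> I p.

Definition Vm (F : fieldType) (m : nat) (p : FA F) : Prop :=
  forall w, w \in msupp p -> perm_eq (fmonom_val w) (iota 0 m).

Definition Wnm (F : fieldType) (n m : nat) (p : FA F) : Prop :=
  Vm m p /\ Tideal (xvar F 1 ^+ n) p.

(* coordinates of a polynomial on the words of length m in the letters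
   0..m-1 (injective on V_m): an F-linear map into a finite-dim. space *)
Definition coordV (F : fieldType) (m : nat) (p : FA F)
  : 'rV[F]_#|{: m.-tuple 'I_m}| :=
  \row_i p@_(FMonom (map (@nat_of_ord m) (@enum_val (m.-tuple 'I_m) predT i))).

(* dim S >= d for a subspace S of V_m: the image of S under the coordinate
   isomorphism is a subspace U of dimension >= d *)
Definition dim_ge (F : fieldType) (m : nat) (S : FA F -> Prop) (d : nat) : Prop :=
  exists U : {vspace 'rV[F]_#|{: m.-tuple 'I_m}|},
    (forall v, v \in U <-> exists p, S p /\ coordV m p = v) /\ (d <= \dim U)%N.

(* Fix an injection f : 'I_(m-n+1) -> 'I_m.  Its values spell a word w_f of length m-n+1,
   and the n-1 unused letters are single-letter words; together these are n blocks.  The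
   full polarization of x^n at these blocks (the sum of their products in all n! orders)
   is an alternating sum of n-th powers of sums of blocks, hence lies in (x^n)^T, and it is
   multilinear in x_1, ..., x_m.  This gives m!/(n-1)! elements of W_{n,m}.
   They are linearly independent.  In a vanishing combination, let X(t) collect the
   contributions to the coefficient of the word t of the orders that start with the long
   block.  As the other blocks are single letters, the orders putting it at position p
   contribute X(rot^p t), so the sum of X over the first n rotations of t is the vanishing
   coefficient of t.  Hence X is invariant under n rotations, and trivially under m; as n
   and m are coprime X is rotation invariant, so n X = 0 and X = 0 in characteristic zero.
   At an order starting with w_f only the term of f contributes to X, so its coefficient
   is zero. *)

From mathcomp Require Import all_boot all_algebra.
From mathcomp Require Import finmap monalg.
From HB Require Import structures.
From Stdlib Require Import Classical.
From mathcomp Require Import zify.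
Set Implicit Arguments. Unset Strict Implicit. Unset Printing Implicit Defensive.
Import GRing.Theory.
Local Open Scope ring_scope.

Local Notation "1" := (@mone _) : monom_scope.

Section Polarization.
Variable R : comNzRingType.

Lemma prodr_nat_forall (I : finType) (P : pred I) :
  \prod_i ((P i)%:R : R) = [forall i, P i]%:R.
Proof.
have [allP|/forallPn[i /negbTE Pi]] := boolP [forall i, P i].
  by rewrite big1 // => i _; rewrite (forallP allP).
by rewrite (bigD1 i) //= Pi mul0r.
Qed.

Lemma signed_sum_supersets (I J : finType) (g : J -> I) :
  \sum_(phi : {ffun I -> bool})
     (\prod_i (if phi i then 1 else -1 : R)) * [forall j, phi (g j)]%:R
  = [forall i, i \in codom g]%:R.
Proof.
pose h i (b : bool) : R := (if b then 1 else -1) * (b || (i \notin codom g))%:R.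
transitivity (\sum_(phi : {ffun I -> bool}) \prod_i h i (phi i)).
  apply: eq_bigr => phi _; rewrite big_split /= prodr_nat_forall; congr (_ * (nat_of_bool _)%:R).
  apply/idP/idP => /forallP allP; apply/forallP.
    by move=> i; case: codomP => [[j ->]|]; rewrite ?orbT ?allP.
  by move=> j; have := allP (g j); rewrite codom_f orbF.
rewrite -bigA_distr_bigA -prodr_nat_forall; apply: eq_bigr => i _.
by rewrite big_bool /h /=; case: (i \in codom g); rewrite /= ?mulr0 ?addr0 ?mulr1 ?subrr.
Qed.

Lemma codom_fullE (T : finType) (g : T -> T) :
  [forall i, i \in codom g] = injectiveb g.
Proof.
apply/forallP/injectiveP => [onto_g | inj_g i]; last exact: injF_onto.
have /image_injP inj_g : #|codom g| == #|T| by apply/eqP/eq_card => i; rewrite onto_g.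
by move=> x y; apply: inj_g.
Qed.

Variable A : lalgType R.

Lemma polarization (I : finType) (y : I -> A) :
  \sum_(phi : {ffun I -> bool})
     (\prod_i (if phi i then 1 else -1 : R)) *: (\sum_(i | phi i) y i) ^+ #|I|
  = \sum_(g : {ffun I -> I} | injectiveb g) \prod_j y (g j).
Proof.
have expand phi : (\sum_(i | phi i) y i) ^+ #|I|
    = \sum_(g : {ffun I -> I}) [forall j, phi (g j)]%:R *: \prod_j y (g j).
  rewrite -prodr_const bigA_distr_big big_mkcond /=; apply: eq_bigr => g _.
  have -> : (g \in ffun_on phi) = [forall j, phi (g j)] by apply/ffun_onP/forallP.
  by case: forallP; rewrite ?scale1r ?scale0r.
under eq_bigr => phi _ do rewrite expand scaler_sumr.
rewrite [LHS]exchange_big [RHS]big_mkcond /=; apply: eq_bigr => g _.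
under eq_bigr => phi _ do rewrite scalerA.
rewrite -scaler_suml signed_sum_supersets codom_fullE.
by case: injectiveb; rewrite ?scale1r ?scale0r.
Qed.

End Polarization.

Section TIdeal.
Variable F : fieldType.
Implicit Types f p q z : FA F.

Lemma Tideal0 f : Tideal f 0.
Proof. by move=> I [_ I0 _ _]. Qed.

Lemma TidealZD f c p q : Tideal f p -> Tideal f q -> Tideal f (c *: p + q).
Proof.
move=> Tp Tq I idI TI If; have [_ _ IZD _] := idI.
exact: IZD (Tp I idI TI If) (Tq I idI TI If).
Qed.

Lemma nonunitalE p : nonunital p <-> @mcoeff {fmonom nat} F 1%M p = 0.
Proof. by rewrite /nonunital -fm1 fmK. Qed.

Lemma malgC_comm (c : F) p : GRing.comm (c%:MP : FA F) p.
Proof.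
rewrite /GRing.comm {2}[p]monalgE {1}[p]monalgE mulr_sumr mulr_suml.
by apply: eq_bigr => w _; rewrite !malgM_def !fgmulUU mul1m mulm1 mulrC.
Qed.

Definition xsubst_word z (w : {fmonom nat}) : FA F := z ^+ size (fmonom_val w).

Lemma xsubst_word_mmorphism z : mmorphism (xsubst_word z).
Proof. by split=> [u v|]; rewrite /xsubst_word ?fmM ?size_cat ?exprD // fm1 expr0. Qed.

HB.instance Definition _ z :=
  monalg.isMultiplicative.Build _ _ (xsubst_word z) (xsubst_word_mmorphism z).

Definition xsubst z : FA F -> FA F := mmap (@malgC {fmonom nat} F) (xsubst_word z).

Lemma xsubstM z p q : xsubst z (p * q) = xsubst z p * xsubst z q.
Proof.
have [xsM _] := @commr_mmap_is_multiplicative _ _ _ (@malgC {fmonom nat} F)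
  (xsubst_word z) (fun c _ _ => malgC_comm _ _).
exact: xsM.
Qed.

Lemma xsubstX z p k : xsubst z (p ^+ k) = xsubst z p ^+ k.
Proof.
elim: k => [|k IHk]; first by rewrite !expr0 /xsubst mmap1.
by rewrite !exprS xsubstM IHk.
Qed.

Lemma xsubst_x1 z : xsubst z (xvar F 1) = z.
Proof. by rewrite /xsubst mmapU /= fmuE /xsubst_word expr1 mul1r. Qed.

Lemma xsubst_nonunital z p : nonunital z -> nonunital p -> nonunital (xsubst z p).
Proof.
move=> /nonunitalE z0 /nonunitalE p0; apply/nonunitalE.
rewrite /xsubst mmapE raddf_sum /= big1 // => w _.
rewrite rmorphM /= malgCK rmorphXn /= z0 expr0n.
have [/size0nil w1|_] := eqP; last by rewrite mulr0.
have -> : w = 1%M by apply/eqP; rewrite fmP w1 fm1.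
by rewrite p0 mul0r.
Qed.

Lemma xsubst_endo z : nonunital z -> is_endo (xsubst z).
Proof.
move=> nz; split=> [p|c p q _ _|p q _ _]; first exact: xsubst_nonunital.
  by rewrite /xsubst mmapD mmapZ mul_malgC.
exact: xsubstM.
Qed.

Lemma Tideal_expr k z : nonunital z -> Tideal (xvar F 1 ^+ k) (z ^+ k).
Proof.
move=> nz I _ TI Ix; rewrite -(xsubst_x1 z) -xsubstX.
exact: TI (xsubst_endo nz) _ Ix.
Qed.

End TIdeal.

Section Arrangements.
Variable T : eqType.
Implicit Types (bs : seq (seq T)).

Definition arrange n bs (g : {ffun 'I_n -> 'I_n}) : seq T :=
  flatten [seq nth [::] bs (g j) | j <- enum 'I_n].

Definition rot_ffun n (g : {ffun 'I_n -> 'I_n}) : {ffun 'I_n -> 'I_n} :=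
  [ffun j => g (ordS j)].

Lemma perm_map_enum_inj n (g : 'I_n -> 'I_n) :
  injective g -> perm_eq [seq g j | j <- enum 'I_n] (enum 'I_n).
Proof.
move=> inj_g; apply: uniq_perm; first by rewrite map_inj_uniq // enum_uniq.
  exact: enum_uniq.
by move=> i; rewrite mem_enum; apply/mapP; exists (invF inj_g i); rewrite ?mem_enum ?f_invF.
Qed.

Lemma perm_arrange n bs (g : {ffun 'I_n -> 'I_n}) :
  size bs = n -> injective g -> perm_eq (arrange bs g) (flatten bs).
Proof.
move=> size_bs inj_g; pose blk (j : 'I_n) := nth [::] bs j.
have {2}-> : bs = map blk (enum 'I_n).
  by rewrite (map_comp (nth [::] bs) val) val_enum_ord -size_bs -/(mkseq _ _) mkseq_nth.
rewrite /arrange (map_comp blk g).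
exact/perm_flatten/perm_map/perm_map_enum_inj.
Qed.

Lemma map_ordS_enum n : [seq ordS j | j <- enum 'I_n] = rot 1 (enum 'I_n).
Proof.
apply: (inj_map val_inj); rewrite map_rot -map_comp val_enum_ord.
have -> : [seq (val \o @ordS n) i | i <- enum 'I_n]
    = [seq (x.+1 %% n)%N | x <- map val (enum 'I_n)] by rewrite -map_comp.
rewrite val_enum_ord.
case: n => // n; rewrite -[in LHS](addn1 n) iotaD map_cat /= rot1_cons -cats1 addn1 modnn.
have -> : iota 1 n = map (addn 1) (iota 0 n) by rewrite -iotaDl.
congr (_ ++ _); apply/eq_in_map => x; rewrite mem_iota add0n => /andP[_ x_lt].
by rewrite modn_small.
Qed.

Lemma arrange_rot n bs (g : {ffun 'I_n.+1 -> 'I_n.+1}) :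
  size (nth [::] bs (g ord0)) = 1%N -> arrange bs (rot_ffun g) = rot 1 (arrange bs g).
Proof.
move=> g0; rewrite /arrange.
have -> : [seq nth [::] bs (rot_ffun g j) | j <- enum 'I_n.+1]
    = [seq nth [::] bs (g j) | j <- rot 1 (enum 'I_n.+1)].
  by rewrite -map_ordS_enum -[RHS]map_comp; apply: eq_map => j; rewrite /= ffunE.
rewrite map_rot enum_ordSl /=; case: (nth [::] bs (g ord0)) g0 => [|a []] //= _.
by rewrite !rot1_cons flatten_rcons cats1.
Qed.

Lemma take_arrange n bs (g : {ffun 'I_n.+1 -> 'I_n.+1}) :
  take (size (nth [::] bs (g ord0))) (arrange bs g) = nth [::] bs (g ord0).
Proof. by rewrite /arrange enum_ordSl /= take_size_cat. Qed.

Lemma rot_ffun_inj n : injective (@rot_ffun n).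
Proof.
move=> g1 g2 /ffunP g12; apply/ffunP => j.
by have := g12 (ord_pred j); rewrite !ffunE ord_predK.
Qed.

Lemma injectiveb_rot_ffun n (g : {ffun 'I_n -> 'I_n}) :
  injectiveb (rot_ffun g) = injectiveb g.
Proof.
apply/injectiveP/injectiveP => inj_g i j.
  by move=> gij; apply: (can_inj (@ord_predK n)); apply: inj_g; rewrite !ffunE !ord_predK.
by rewrite !ffunE => /inj_g; apply: (can_inj (@ordSK n)).
Qed.

End Arrangements.

Section InjectionBlocks.
Variables k m : nat.
Implicit Types f : {ffun 'I_(m - k) -> 'I_m}.

Definition word f : seq nat := map val (codom f).
Definition unused f : seq nat := [seq val i | i <- enum 'I_m & i \notin codom f].
Definition blocks f : seq (seq nat) := rcons [seq [:: a] | a <- unused f] (word f).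

Lemma size_word f : size (word f) = (m - k)%N.
Proof. by rewrite size_map size_codom card_ord. Qed.

Lemma word_inj : injective word.
Proof. by move=> f1 f2 /(inj_map val_inj) eq_codom; apply: (can_inj fgraphK); apply: val_inj. Qed.

Lemma perm_unused_word f : injective f -> perm_eq (unused f ++ word f) (iota 0 m).
Proof.
move=> inj_f; rewrite -val_enum_ord /unused /word -map_cat; apply: perm_map.
have perm_codom : perm_eq (codom f) [seq i <- enum 'I_m | i \in codom f].
  apply: uniq_perm; first by rewrite codomE map_inj_uniq // enum_uniq.
    by rewrite filter_uniq // enum_uniq.
  by move=> i; rewrite mem_filter mem_enum andbT.
apply: perm_trans (perm_cat (perm_refl _) perm_codom) _.
by rewrite perm_catC (perm_filterC (mem (codom f))).
Qed.

Lemma size_unused f : (k <= m)%N -> injective f -> size (unused f) = k.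
Proof.
move=> le_km /perm_unused_word/perm_size; rewrite size_cat size_word size_iota.
by move: (size _) => s; lia.
Qed.

Lemma size_blocks f : (k <= m)%N -> injective f -> size (blocks f) = k.+1.
Proof. by move=> le_km inj_f; rewrite size_rcons size_map size_unused. Qed.

Lemma nth_blocks_word f : (k <= m)%N -> injective f -> nth [::] (blocks f) k = word f.
Proof. by move=> le_km inj_f; rewrite nth_rcons size_map size_unused // ltnn eqxx. Qed.

Lemma nth_blocks_unused f i : (k <= m)%N -> injective f -> (i < k)%N ->
  nth [::] (blocks f) i = [:: nth 0%N (unused f) i].
Proof.
move=> le_km inj_f lt_ik.
by rewrite nth_rcons size_map size_unused // lt_ik (nth_map 0%N) ?size_unused.
Qed.

Lemma flatten_blocks f : flatten (blocks f) = unused f ++ word f.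
Proof. by rewrite flatten_rcons flatten_seq1. Qed.

Lemma nth_blocks_neq0 f (i : 'I_k.+1) :
  (k < m)%N -> injective f -> nth [::] (blocks f) i != [::].
Proof.
move=> lt_km inj_f; have le_km := ltnW lt_km.
have [lt_ik | le_ki] := ltnP i k; first by rewrite nth_blocks_unused.
have -> : nat_of_ord i = k by apply/eqP; rewrite eqn_leq le_ki -ltnS ltn_ord.
by rewrite nth_blocks_word // -size_eq0 size_word subn_eq0 -ltnNge.
Qed.

Lemma perm_arrange_blocks f (g : {ffun 'I_k.+1 -> 'I_k.+1}) :
  (k <= m)%N -> injective f -> injective g -> perm_eq (arrange (blocks f) g) (iota 0 m).
Proof.
move=> le_km inj_f inj_g; apply: perm_trans (perm_unused_word inj_f).
by rewrite -flatten_blocks perm_arrange ?size_blocks.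
Qed.

End InjectionBlocks.

Section PolarPolynomial.
Variable F : fieldType.

Definition monomial (w : seq nat) : FA F := << FMonom w >>.

Definition polar_poly n (bs : seq (seq nat)) : FA F :=
  \sum_(g : {ffun 'I_n -> 'I_n} | injectiveb g) monomial (arrange bs g).

Lemma mcoeff_monomial w t : (monomial w)@_(FMonom t) = (w == t)%:R.
Proof. by rewrite mcoeffU1. Qed.

Lemma big_monomial (I : Type) (r : seq I) (u : I -> seq nat) :
  \prod_(j <- r) monomial (u j) = monomial (flatten (map u r)).
Proof.
elim: r => [|j r IHr]; first by rewrite big_nil /monomial /= -fm1 fmK.
rewrite big_cons IHr /monomial malgM_def fgmulUU mulr1; congr << _ >>.
by apply/eqP; rewrite fmP fmM.
Qed.

Lemma monomial_nonunital w : w != [::] -> nonunital (monomial w).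
Proof. by move=> w_neq0; apply/nonunitalE; rewrite mcoeffU1 fmP fm1 (negbTE w_neq0). Qed.

Lemma mcoeff_polar_poly n bs t :
  (polar_poly n bs)@_(FMonom t)
    = \sum_(g : {ffun 'I_n -> 'I_n} | injectiveb g) (arrange bs g == t)%:R.
Proof. by rewrite raddf_sum /=; apply: eq_bigr => g _; rewrite mcoeff_monomial. Qed.

Lemma Tideal_polar_poly n bs :
  (forall i : 'I_n, nth [::] bs i != [::]) -> Tideal (xvar F 1 ^+ n) (polar_poly n bs).
Proof.
move=> bs_neq0; pose y (i : 'I_n) := monomial (nth [::] bs i).
have -> : polar_poly n bs = \sum_(g : {ffun 'I_n -> 'I_n} | injectiveb g) \prod_j y (g j).
  by apply: eq_bigr => g _; rewrite /y [index_enum _]unlock -enumT big_monomial.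
rewrite -polarization card_ord; apply: big_rec => [|phi p _ Tp]; first exact: Tideal0.
apply: TidealZD Tp; apply: Tideal_expr; apply/nonunitalE.
by rewrite raddf_sum big1 // => i _; apply/nonunitalE/monomial_nonunital.
Qed.

Lemma Vm_polar_poly n m bs :
  size bs = n -> perm_eq (flatten bs) (iota 0 m) -> Vm m (polar_poly n bs).
Proof.
move=> size_bs perm_bs w; rewrite -mcoeff_neq0 -[w]fmK mcoeff_polar_poly.
apply: contraNT => not_perm; rewrite big1 // => g /injectiveP inj_g.
case: eqP => // arr_g; case/negP: not_perm; rewrite -arr_g.
exact: perm_trans (perm_arrange size_bs inj_g) perm_bs.
Qed.

End PolarPolynomial.

Section PolarCoefficients.
Variables (F : fieldType) (k : nat) (bs : seq (seq nat)).
Implicit Types (p : 'I_k.+1) (g : {ffun 'I_k.+1 -> 'I_k.+1}).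

Definition polar_coeff_at p (t : seq nat) : F :=
  \sum_(g : {ffun 'I_k.+1 -> 'I_k.+1} | injectiveb g && (g p == ord_max)) (arrange bs g == t)%:R.

Lemma mcoeff_polar_poly_at t :
  (polar_poly F k.+1 bs)@_(FMonom t) = \sum_p polar_coeff_at p t.
Proof.
rewrite mcoeff_polar_poly /polar_coeff_at.
rewrite (exchange_big_dep (fun g : {ffun 'I_k.+1 -> 'I_k.+1} => injectiveb g)) /=;
  last by move=> p g _ /andP[].
apply: eq_bigr => g inj_gb; have inj_g := injectiveP _ inj_gb.
rewrite (bigD1 (invF inj_g ord_max)) /= ?inj_gb ?f_invF ?eqxx // big1 ?addr0 // => p.
by move=> /andP[/eqP gp /eqP]; rewrite -gp invF_f.
Qed.

Lemma polar_coeff_at0_eq0 t :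
  take (size (nth [::] bs k)) t != nth [::] bs k -> polar_coeff_at ord0 t = 0.
Proof.
move=> t_prefix; rewrite /polar_coeff_at big1 // => g /andP[_ /eqP g0].
case: eqP => // arr_g; case/negP: t_prefix.
by rewrite -arr_g; have := take_arrange bs g; rewrite g0 /= => ->.
Qed.

Lemma polar_coeff_at0_neq0 g :
  [pchar F] =i pred0 -> injective g -> g ord0 = ord_max ->
  polar_coeff_at ord0 (arrange bs g) != 0.
Proof.
move=> charF0 /injectiveP inj_g g0; rewrite /polar_coeff_at -natr_sum.
rewrite (bigD1 g) /=; last by rewrite inj_g g0 eqxx.
by move/pcharf0P: charF0 => ->; rewrite eqxx.
Qed.

Hypothesis singleton_blocks : forall i, (i < k)%N -> size (nth [::] bs i) = 1%N.

Lemma polar_coeff_at_rot (j : nat) t : (j < k)%N ->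
  polar_coeff_at (inord j) (rot 1 t) = polar_coeff_at (inord j.+1) t.
Proof.
move=> lt_jk; have Sj : ordS (inord j : 'I_k.+1) = inord j.+1.
  by apply: val_inj; rewrite /= !inordK ?modn_small // ltnW.
rewrite /polar_coeff_at (reindex_inj (@rot_ffun_inj _)) /=.
apply: eq_big => [g | g]; rewrite /= injectiveb_rot_ffun ffunE Sj //.
move=> /andP[/injectiveP inj_g /eqP gSj]; rewrite arrange_rot ?(inj_eq (@rot_inj 1 _)) //.
apply: singleton_blocks; rewrite ltn_neqAle -ltnS ltn_ord andbT; apply/eqP => g0.
have /inj_g/(congr1 val) : g ord0 = g (inord j.+1) by rewrite gSj; apply: val_inj.
by rewrite /= inordK.
Qed.

Lemma polar_coeff_at_iter (j : nat) t : (j <= k)%N ->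
  polar_coeff_at ord0 (iter j (rot 1) t) = polar_coeff_at (inord j) t.
Proof.
elim: j t => [|j IHj] t le_jk.
  have inord0 : inord 0 = ord0 :> 'I_k.+1 by apply: val_inj; rewrite /= inordK.
  by rewrite inord0.
by rewrite iterSr IHj ?polar_coeff_at_rot // ltnW.
Qed.

Lemma mcoeff_polar_poly_rot t :
  (polar_poly F k.+1 bs)@_(FMonom t) = \sum_(p < k.+1) polar_coeff_at ord0 (iter p (rot 1) t).
Proof.
rewrite mcoeff_polar_poly_at; apply: eq_bigr => p _.
by rewrite polar_coeff_at_iter ?inord_val // -ltnS.
Qed.

End PolarCoefficients.

Arguments polar_coeff_at : clear implicits.

Lemma iter_rot1_size (T : Type) (t : seq T) : iter (size t) (rot 1) t = t.
Proof.
suff iter_rot j : (j <= size t)%N -> iter j (rot 1) t = rot j t by rewrite iter_rot ?rot_size.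
elim: j => [|j IHj] le_jt; first by rewrite rot0.
by rewrite iterS IHj ?(ltnW le_jt) // (rotS le_jt).
Qed.

Section CyclicSums.
Variables (T : Type) (r : T -> T) (P : pred T).
Hypothesis P_r : forall t, P t -> P (r t).

Lemma iter_stable j t : P t -> P (iter j r t).
Proof. by elim: j => //= j IHj /IHj /P_r. Qed.

(* Bezout: [1 + c b = d a], so [r] agrees with [r ^ (d a)] modulo [r ^ b = id]. *)
Lemma iter_coprime_invariant (U : Type) (X : T -> U) a b :
  (0 < a)%N -> coprime a b ->
  (forall t, P t -> iter b r t = t) -> (forall t, P t -> X (iter a r t) = X t) ->
  forall t, P t -> X (r t) = X t.
Proof.
move=> a_gt0 cop_ab rb_id Xra t Pt.
have [c _] := Bezoutl b a_gt0; rewrite (eqP cop_ab) => /dvdnP[d Ed].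
have rcb_id j u : P u -> iter (j * b) r u = u.
  by elim: j => // j IHj Pu; rewrite mulSn iterD IHj ?rb_id.
have Xrda j u : P u -> X (iter (j * a) r u) = X u.
  by elim: j => // j IHj Pu; rewrite mulSn iterD Xra ?IHj ?iter_stable.
by rewrite -(rcb_id c (r t)) ?P_r // -iterSr -add1n Ed Xrda.
Qed.

Lemma cyclic_sum_eq0 (F : fieldType) (X : T -> F) n m :
  [pchar F] =i pred0 -> (0 < n)%N -> coprime n m ->
  (forall t, P t -> iter m r t = t) ->
  (forall t, P t -> \sum_(p < n) X (iter p r t) = 0) ->
  forall t, P t -> X t = 0.
Proof.
move=> charF0 n_gt0 cop_nm rm_id sum0.
have Xrn t : P t -> X (iter n r t) = X t.
  move=> Pt; apply/eqP; rewrite -subr_eq0.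
  have <- /= := telescope_sumr (fun k => X (iter k r t)) (leq0n n).
  rewrite big_mkord sumrB.
  under eq_bigr do rewrite -iterS iterSr.
  by rewrite !sum0 ?P_r // subr0.
have Xr := iter_coprime_invariant n_gt0 cop_nm rm_id Xrn.
have Xiter j t : P t -> X (iter j r t) = X t.
  by elim: j => // j IHj Pt; rewrite iterS Xr ?iter_stable ?IHj.
move=> t Pt; have /eqP := sum0 _ Pt.
under eq_bigr do rewrite Xiter //.
rewrite sumr_const card_ord -mulr_natl mulf_eq0 => /orP[|/eqP //].
by move/pcharf0P: charF0 => ->; rewrite eqn0Ngt n_gt0.
Qed.

End CyclicSums.

Lemma linear_closed_vspace (K : fieldType) (vT : vectType K) (P : vT -> Prop) :
  P 0 -> (forall c u v, P u -> P v -> P (c *: u + v)) ->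
  exists U : {vspace vT}, forall v, v \in U <-> P v.
Proof.
move=> P0 PZD.
have extend (U : {vspace vT}) v : (forall u, u \in U -> P u) -> P v -> v \notin U ->
    (forall u, u \in (U + <[v]>)%VS -> P u) /\ (\dim U < \dim (U + <[v]>))%N.
  move=> UP Pv vNU; split=> [u /memv_addP[w /UP Pw [_ /vlineP[c ->] ->]] |].
    by rewrite addrC; apply: PZD.
  rewrite ltn_neqAle (dimv_leqif_sup (addvSl U _)).2 dimvS ?addvSl // andbT.
  by apply: contra vNU => /subvP; apply; apply: subvP (addvSr U _) _ (memv_line v).
have maximal (U : {vspace vT}) : (forall u, u \in U -> P u) ->
    ~ (exists v, P v /\ v \notin U) -> exists U : {vspace vT}, forall v, v \in U <-> P v.
  move=> UP noPv; exists U => v; split=> [/UP // | Pv].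
  by apply/negPn/negP => vNU; apply: noPv; exists v.
suff grow d (U : {vspace vT}) : (forall u, u \in U -> P u) ->
    (\dim {:vT} - \dim U <= d)%N -> exists U : {vspace vT}, forall v, v \in U <-> P v.
  apply: (grow _ 0%VS); last by rewrite dimv0 subn0.
  by move=> u; rewrite memv0 => /eqP->.
elim: d U => [|d IHd] U UP dimU;
  (have [[v [Pv vNU]] | ] := classic (exists v, P v /\ v \notin U); last exact: maximal);
  have [UvP ltU] := extend U v UP Pv vNU; have := dimvS (subvf (U + <[v]>)%VS).
  by move: dimU; lia.
by move=> le_Uv; apply: (IHd _ UvP); lia.
Qed.

Section WnmSubspace.
Variable F : fieldType.

Lemma coordV_ZD m c (p q : FA F) : coordV m (c *: p + q) = c *: coordV m p + coordV m q.
Proof. by apply/rowP => i; rewrite !mxE mcoeffD mcoeffZ. Qed.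

Lemma coordV_mcoeff m t : size t = m -> all (fun x => x < m)%N t ->
  exists j, forall p : FA F, coordV m p 0 j = p@_(FMonom t).
Proof.
move=> size_t lt_t; have [s val_s] : exists s : seq 'I_m, map val s = t.
  elim: t {size_t} lt_t => [|x t IHt] /=; first by exists [::].
  by case/andP=> lt_xm /IHt[s val_s]; exists (Ordinal lt_xm :: s); rewrite /= val_s.
have size_s : size s == m by rewrite -(size_map val) val_s size_t.
by exists (enum_rank (Tuple size_s)) => p; rewrite mxE enum_rankK val_s.
Qed.

Lemma Wnm0 n m : Wnm n m (0 : FA F).
Proof. by split=> [w|]; rewrite ?msupp0 ?inE //; apply: Tideal0. Qed.

Lemma WnmZD n m c (p q : FA F) : Wnm n m p -> Wnm n m q -> Wnm n m (c *: p + q).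
Proof.
move=> [Vp Tp] [Vq Tq]; split; last exact: TidealZD.
move=> w /(fsubsetP (msuppD_le _ _)); rewrite inE => /orP[/(fsubsetP (msuppZ_le _ _))|].
  exact: Vp.
exact: Vq.
Qed.

End WnmSubspace.

Section Independence.
Variables (F : fieldType) (k m : nat).
Hypotheses (charF0 : [pchar F] =i pred0) (lt_km : (k < m)%N) (cop_km : coprime k.+1 m).
Let le_km := ltnW lt_km.
Implicit Types f : {ffun 'I_(m - k) -> 'I_m}.

Definition polar_blocks f : FA F := polar_poly F k.+1 (blocks f).

Lemma polar_blocks_Wnm f : injective f -> Wnm k.+1 m (polar_blocks f).
Proof.
move=> inj_f; split; last by apply: Tideal_polar_poly => i; apply: nth_blocks_neq0.
by apply: Vm_polar_poly; rewrite ?size_blocks ?flatten_blocks ?perm_unused_word.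
Qed.

Lemma mcoeff_polar_blocks_rot f t : injective f ->
  (polar_blocks f)@_(FMonom t)
    = \sum_(p < k.+1) polar_coeff_at F k (blocks f) ord0 (iter p (rot 1) t).
Proof.
move=> inj_f; apply: mcoeff_polar_poly_rot => i lt_ik.
by rewrite nth_blocks_unused.
Qed.

Lemma polar_coeff_at_blocks_eq0 f f' (g : {ffun 'I_k.+1 -> 'I_k.+1}) :
  injective f -> injective f' -> g ord0 = ord_max -> f' != f ->
  polar_coeff_at F k (blocks f') ord0 (arrange (blocks f) g) = 0.
Proof.
move=> inj_f inj_f' g0 neq_f'f; apply: polar_coeff_at0_eq0.
have := take_arrange (blocks f) g; rewrite g0 /= !nth_blocks_word ?size_word // => ->.
by apply: contra neq_f'f => /eqP/word_inj->.
Qed.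

Lemma free_polar_blocks :
  free [seq coordV m (polar_blocks f)
         | f <- enum [set f : {ffun 'I_(m - k) -> 'I_m} | injectiveb f]].
Proof.
set fs := enum _; set s := map _ fs.
have size_s : size s = size fs by rewrite size_map.
pose fd : {ffun 'I_(m - k) -> 'I_m} := [ffun _ => Ordinal (leq_ltn_trans (leq0n k) lt_km)].
have inj_fs i : (i < size fs)%N -> injective (nth fd fs i).
  by move=> lt_i; have := mem_nth fd lt_i; rewrite mem_enum inE => /injectiveP.
rewrite -[s]/(tval (in_tuple s)); apply/freeP => c comb0 i0.
pose valid t := perm_eq t (iota 0 m).
have coeff0 t : valid t ->
    \sum_(i < size s) c i * (polar_blocks (nth fd fs i))@_(FMonom t) = 0.
  move=> t_perm; have [||j coord_j] := @coordV_mcoeff F m t.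
  - by rewrite (perm_size t_perm) size_iota.
  - by rewrite (perm_all _ t_perm); apply/allP => x; rewrite mem_iota.
  have := congr1 (fun v : 'rV[F]_#|{: m.-tuple 'I_m}| => v 0 j) comb0.
  rewrite summxE mxE => sum0; rewrite -[X in _ = X]sum0.
  by apply: eq_bigr => i _; rewrite mxE (nth_map fd) -?size_s // coord_j.
pose X t := \sum_(i < size s) c i * polar_coeff_at F k (blocks (nth fd fs i)) ord0 t.
have X0 : forall t, valid t -> X t = 0.
  apply: (@cyclic_sum_eq0 _ (rot 1) valid _ F X k.+1 m) => // [t | t t_perm | t t_perm].
  - by rewrite /valid perm_rot.
  - by rewrite -{1}(size_iota 0 m) -(perm_size t_perm) iter_rot1_size.
  rewrite -[RHS](coeff0 _ t_perm) /X exchange_big /=; apply: eq_bigr => i _.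
  by rewrite -mulr_sumr mcoeff_polar_blocks_rot //; apply: inj_fs; rewrite -size_s.
have lt_i0 : (i0 < size fs)%N by rewrite -size_s.
pose g0 : {ffun 'I_k.+1 -> 'I_k.+1} := [ffun j => ord_pred j].
have inj_g0 : injective g0 by move=> x y; rewrite !ffunE; exact: (can_inj (@ord_predK _)).
have g00 : g0 ord0 = ord_max by apply: val_inj; rewrite ffunE /= modn_small.
have := X0 _ (perm_arrange_blocks le_km (inj_fs _ lt_i0) inj_g0).
rewrite /X (bigD1 i0) //= big1 ?addr0 => [/eqP|i neq_ii0].
  by rewrite mulf_eq0 (negbTE (polar_coeff_at0_neq0 _ charF0 inj_g0 g00)) orbF => /eqP.
have lt_i : (i < size fs)%N by rewrite -size_s.
rewrite polar_coeff_at_blocks_eq0 ?mulr0 //; [exact: inj_fs | exact: inj_fs |].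
by rewrite nth_uniq ?enum_uniq.
Qed.

End Independence.

Theorem proposition5p5 (F : fieldType) (charF0 : [pchar F]%R =i pred0)
  (n m : nat) (n_gt0 : (0 < n)%N) (n_le_m : (n <= m)%N) (cop : coprime n m) :
  @dim_ge F m (@Wnm F n m) (m`! %/ n.-1`!).
Proof.
case: n n_gt0 n_le_m cop => // k _ lt_km cop /=.
pose imW (v : 'rV[F]_#|{: m.-tuple 'I_m}|) := exists p : FA F, Wnm k.+1 m p /\ coordV m p = v.
have [U memU] : exists U : {vspace 'rV[F]_#|{: m.-tuple 'I_m}|}, forall v, v \in U <-> imW v.
  apply: linear_closed_vspace => [|c _ _ [p [Wp <-]] [q [Wq <-]]].
    by exists 0; split; [apply: Wnm0 | apply/rowP => i; rewrite !mxE raddf0].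
  by exists (c *: p + q); split; [apply: WnmZD | apply: coordV_ZD].
exists U; split => //.
set injs := enum [set f : {ffun 'I_(m - k) -> 'I_m} | injectiveb f].
have span_sub : (<<[seq coordV m (polar_blocks F f) | f <- injs]>> <= U)%VS.
  apply/span_subvP => _ /mapP[f f_inj ->]; apply/memU; exists (polar_blocks F f).
  by split=> //; apply: polar_blocks_Wnm; move: f_inj; rewrite mem_enum inE => /injectiveP.
have := dimvS span_sub; rewrite (eqP (free_polar_blocks charF0 lt_km cop)) size_map.
by rewrite -cardE card_inj_ffuns !card_ord ffact_factd ?leq_subr // subKn // ltnW.
Qed.
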